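(* Let $\lambda$ be a nonzero real number, $x$ real, and $n\ge0$ an integer. Then $$\beta_{n,\lambda}(x)=\sum_{k=0}^{n}k!\,S_{2,\lambda}(n,k)\sum_{j=0}^{k}\binom{x}{j}\frac{\lambda^{k-j}}{(k-j+1)!}(1)_{k-j+1,\frac{1}{\lambda}}.$$ In particular, for $x=0$, $$\beta_{n,\lambda}=\sum_{k=0}^{n}k!\,S_{2,\lambda}(n,k)\frac{\lambda^{k}}{(k+1)!}(1)_{k+1,\frac{1}{\lambda}}.$$
   Context: For real $y$, $\mu\neq 0$ and integer $k\ge0$: $(y)_{0,\mu}=1$, $(y)_{k,\mu}=y(y-\mu)\cdots(y-(k-1)\mu)$ (used with $\mu=\lambda$ and $\mu=1/\lambda$); $(y)_0=1$, $(y)_k=y(y-1)\cdots(y-k+1)$. The degenerate exponential is $e_\lambda^x(t)=\sum_{k\ge0}(x)_{k,\lambda}t^k/k!=(1+\lambda t)^{x/\lambda}$, $e_\lambda(t)=e^1_\lambda(t)$. The degenerate Bernoulli polynomials are defined by $\frac{t}{e_\lambda(t)-1}e_\lambda^x(t)=\sum_{n\ge0}\beta_{n,\lambda}(x)\frac{t^n}{n!}$, and $\beta_{n,\lambda}=\beta_{n,\lambda}(0)$. The degenerate Stirling numbers of the second kind are defined by $(x)_{n,\lambda}=\sum_{k=0}^{n}S_{2,\lambda}(n,k)(x)_{k}$ ($n\ge0$). *)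

From HB Require Import structures.
From mathcomp Require Import all_boot all_order all_algebra.
From mathcomp Require Import reals.
Set Implicit Arguments. Unset Strict Implicit. Unset Printing Implicit Defensive.
Import Order.TTheory GRing.Theory Num.Theory.
Local Open Scope ring_scope.

Definition dfall {R : realType} (mu y : R) (k : nat) : R :=
  \prod_(i < k) (y - i%:R * mu).

Definition fall {R : realType} (y : R) (k : nat) : R :=
  \prod_(i < k) (y - i%:R).

Definition binomR {R : realType} (x : R) (j : nat) : R := fall x j / (j`!)%:R.

(* Ordinary coefficients of e_lam(t) - 1 = sum_{m>=1} (1)_{m,lam} t^m / m! *)
Definition egm1_coef {R : realType} (lam : R) (m : nat) : R :=
  if m is 0 then 0 else dfall lam 1 m / (m`!)%:R.

(* Ordinary coefficients of t * e_lam^x(t) = sum_{n>=0} (x)_{n,lam} t^(n+1) / n! *)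
Definition tex_coef {R : realType} (lam x : R) (n : nat) : R :=
  if n is n'.+1 then dfall lam x n' / (n'`!)%:R else 0.

(* b is the sequence of degenerate Bernoulli polynomials beta_{n,lam}(x), i.e.
   t/(e_lam(t)-1) e_lam^x(t) = sum_n b n t^n/n! as formal power series,
   written (since e_lam(t)-1 = t * unit) in the equivalent multiplied-out form
   (e_lam(t)-1) * sum_n b n t^n/n! = t e_lam^x(t), coefficientwise. *)
Definition is_degBernoulli {R : realType} (lam x : R) (b : nat -> R) : Prop :=
  forall n : nat,
    \sum_(i < n.+1) egm1_coef lam (n - i) * (b i / (i`!)%:R) = tex_coef lam x n.

Definition is_degStirling2 {R : realType} (lam : R) (S2 : nat -> nat -> R) : Prop :=
  forall (n : nat) (x : R), dfall lam x n = \sum_(k < n.+1) S2 n k * fall x k.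

(* Work with power series truncated above degree N, i.e. with polynomials
   compared coefficientwise up to N.  Put U = e_lam(t) - 1.  The identity
   e_lam^x(t) = (1 + U)^x holds for natural x by e_lam^(a+b) = e_lam^a e_lam^b;
   comparing coefficients at all naturals then identifies the coefficients of
   U^k as k! S_{2,lam}(l,k) / l!, and with these the identity extends to every
   real x.  Since (1 + U)^lam = e_lam^lam(t) = 1 + lam t, the series
   W(s) = ((1 + s)^lam - 1) / (lam s) satisfies W(U) U = t, so
   t e_lam^x(t) / U = (1 + U)^x W(U); expanding (1 + s)^x W(s) in powers of U
   gives the formula, and the defining relation determines beta recursively. *)

From HB Require Import structures.
From mathcomp Require Import all_boot all_order all_algebra.
From mathcomp Require Import reals.
From mathcomp Require Import ring.
Import Order.TTheory GRing.Theory Num.Theory.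
Local Open Scope ring_scope.

Lemma sumr_ord_widen0 (V : nmodType) m n (F : nat -> V) :
  (m <= n)%N -> (forall i, (m <= i < n)%N -> F i = 0) ->
  \sum_(i < m) F i = \sum_(i < n) F i.
Proof.
move=> le_mn F0; rewrite (big_ord_widen _ _ le_mn).
rewrite [RHS](bigID (fun i : 'I_n => (i < m)%N)) /= [X in _ + X]big1 ?addr0 // => i.
by rewrite -leqNgt => le_mi; apply: F0; rewrite le_mi ltn_ord.
Qed.

Section TruncatedEquality.
Context {R : comNzRingType}.
Implicit Types p q r P Q U : {poly R}.

Definition eq_upto N p q := forall i, (i <= N)%N -> p`_i = q`_i.

Lemma eq_upto_refl {N p} : eq_upto N p p.
Proof. by []. Qed.

Lemma eq_upto_sym {N p q} : eq_upto N p q -> eq_upto N q p.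
Proof. by move=> h i iN; rewrite h. Qed.

Lemma eq_upto_trans {N p q r} : eq_upto N p q -> eq_upto N q r -> eq_upto N p r.
Proof. by move=> h1 h2 i iN; rewrite h1 // h2. Qed.

Lemma eq_uptoM {N p p' q q'} :
  eq_upto N p p' -> eq_upto N q q' -> eq_upto N (p * q) (p' * q').
Proof.
move=> hp hq i iN; rewrite !coefM; apply: eq_bigr => -[j /= lt_ji] _.
rewrite hp ?hq //; first exact: leq_trans (leq_subr j i) iN.
by apply: leq_trans iN; rewrite -ltnS.
Qed.

Lemma coef_expr_lt U k i : U`_0 = 0 -> (i < k)%N -> (U ^+ k)`_i = 0.
Proof.
move=> U0 lt_ik; have /factor_theorem[q ->] : root U 0.
  by rewrite rootE horner_coef0 U0.
by rewrite polyC0 subr0 exprMn coefMXn lt_ik.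
Qed.

Lemma coef_comp_poly_leq P U l : U`_0 = 0 ->
  (P \Po U)`_l = \sum_(i < l.+1) P`_i * (U ^+ i)`_l.
Proof.
move=> U0; pose F i := P`_i * (U ^+ i)`_l.
have widenP : \sum_(i < size P) F i = \sum_(i < size P + l.+1) F i.
  apply: sumr_ord_widen0 => [|i /andP[le_Pi _]]; first exact: leq_addr.
  by rewrite /F nth_default ?mul0r.
have widenl : \sum_(i < l.+1) F i = \sum_(i < size P + l.+1) F i.
  apply: sumr_ord_widen0 => [|i /andP[lt_li _]]; first exact: leq_addl.
  by rewrite /F coef_expr_lt ?mulr0.
by rewrite coef_comp_poly widenP -widenl.
Qed.

Lemma eq_upto_comp {N P Q U} :
  U`_0 = 0 -> eq_upto N P Q -> eq_upto N (P \Po U) (Q \Po U).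
Proof.
move=> U0 h l lN; rewrite !coef_comp_poly_leq //; apply: eq_bigr => -[i /= lt_il] _.
by rewrite h //; apply: leq_trans lN; rewrite -ltnS.
Qed.

End TruncatedEquality.

Section FallingFactorials.
Context {R : realType}.
Implicit Types (mu y a b : R).

Lemma natr_fact_neq0 n : ((n`!)%:R : R) != 0.
Proof. by rewrite pnatr_eq0 -lt0n fact_gt0. Qed.

Lemma dfall0 mu y : dfall mu y 0 = 1.
Proof. by rewrite /dfall big_ord0. Qed.

Lemma dfallS mu y k : dfall mu y k.+1 = dfall mu y k * (y - k%:R * mu).
Proof. by rewrite /dfall big_ord_recr. Qed.

Lemma fall0 y : fall y 0 = 1.
Proof. by rewrite /fall big_ord0. Qed.

Lemma fallS y k : fall y k.+1 = fall y k * (y - k%:R).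
Proof. by rewrite /fall big_ord_recr. Qed.

Lemma fallE y k : fall y k = dfall 1 y k.
Proof. by apply: eq_bigr => i _; rewrite mulr1. Qed.

Lemma dfallD mu a b n :
  dfall mu (a + b) n = \sum_(i < n.+1) 'C(n, i)%:R * dfall mu a i * dfall mu b (n - i).
Proof.
elim: n => [|n IH]; first by rewrite big_ord1 !dfall0 bin0 mulr1 mul1r.
rewrite dfallS IH big_distrl /=.
transitivity (\sum_(i < n.+1) ('C(n, i)%:R * dfall mu a i.+1 * dfall mu b (n - i)
   + 'C(n, i)%:R * dfall mu a i * dfall mu b (n.+1 - i))).
  apply: eq_bigr => -[i /= lt_in] _; have le_in : (i <= n)%N by rewrite -ltnS.
  rewrite (subSn le_in) !dfallS.
  have -> : (n%:R : R) = i%:R + (n - i)%:R by rewrite -natrD subnKC.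
  ring.
(* Pascal's rule, after shifting the index of the first sum. *)
rewrite big_split /= [in RHS]big_ord_recl /= bin0 subn0 dfall0 !mul1r.
under [in RHS]eq_bigr => i _ do rewrite /bump /= binS natrD subSS !mulrDl.
rewrite big_split /= [RHS]addrA [RHS]addrC; congr (_ + _).
rewrite big_ord_recl /= bin0 subn0 dfall0 !mul1r; congr (_ + _).
rewrite big_ord_recr /= bin_small // !mul0r addr0.
by apply: eq_bigr => i _; rewrite /bump /= subSS.
Qed.

Lemma dfall_id mu k : dfall mu mu k.+2 = 0.
Proof. by rewrite /dfall !big_ord_recl /= mul1r subrr !mul0r mulr0. Qed.

Lemma fall_nat m k : fall (m%:R : R) k = (m ^_ k)%:R.
Proof.
elim: k => [|k IH]; first by rewrite fall0 ffactn0.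
rewrite fallS ffactnSr IH natrM.
by case: (leqP k m) => [le_km | lt_mk]; [rewrite natrB | rewrite ffact_small ?mul0r].
Qed.

Lemma fall_dfallV a n : a != 0 -> fall a n = a ^+ n * dfall a^-1 1 n.
Proof.
move=> a_neq0; elim: n => [|n IH]; first by rewrite expr0 dfall0 fall0 mulr1.
by rewrite exprSr dfallS fallS IH; field.
Qed.

(* The falling factorials at the naturals form a triangular system. *)
Lemma fall_nat_sum_eq0 n (d : nat -> R) :
  (forall m : nat, \sum_(k < n) fall m%:R k * d k = 0) -> forall k, (k < n)%N -> d k = 0.
Proof.
move=> h; elim/ltn_ind=> k IH lt_kn; have := h k.
rewrite (bigD1 (Ordinal lt_kn)) //= big1 ?addr0 => [|[i /= lt_in] ne_ik].
  by rewrite fall_nat ffactnn => /eqP; rewrite mulf_eq0 (negbTE (natr_fact_neq0 k)) => /eqP.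
rewrite -val_eqE /= neq_ltn in ne_ik; case/orP: ne_ik => [lt_ik | lt_ki].
  by rewrite IH ?mulr0.
by rewrite fall_nat ffact_small ?mul0r.
Qed.

End FallingFactorials.

Section TruncatedEGF.
Context {R : realType} (N : nat).
Implicit Types (a b : nat -> R) (mu x y : R).

Definition egf a : {poly R} := \poly_(i < N.+1) (a i / (i`!)%:R).

Lemma coef_egf a i : (i <= N)%N -> (egf a)`_i = a i / (i`!)%:R.
Proof. by move=> iN; rewrite coef_poly ltnS iN. Qed.

Lemma eq_egf {a b} : a =1 b -> egf a = egf b.
Proof. by move=> eq_ab; apply/polyP => i; rewrite !coef_poly eq_ab. Qed.

Lemma egfM a b :
  eq_upto N (egf a * egf b) (egf (fun n => \sum_(i < n.+1) 'C(n, i)%:R * a i * b (n - i)%N)).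
Proof.
move=> n nN; rewrite coefM coef_egf // big_distrl /=; apply: eq_bigr => -[i /= lt_in] _.
have le_in : (i <= n)%N by rewrite -ltnS.
rewrite !coef_egf ?(leq_trans le_in) ?(leq_trans (leq_subr i n)) // -(bin_fact le_in) !natrM.
by field; rewrite !natr_fact_neq0 pnatr_eq0 -lt0n bin_gt0.
Qed.

Lemma egf_dfallD mu x y :
  eq_upto N (egf (dfall mu x) * egf (dfall mu y)) (egf (dfall mu (x + y))).
Proof. by rewrite (eq_egf (dfallD mu x y)); exact: egfM. Qed.

Lemma egf_dfall0 mu : eq_upto N (egf (dfall mu 0)) 1.
Proof.
move=> [|i] iN; rewrite coef_egf // coefC /=; first by rewrite dfall0 divr1.
by rewrite /dfall big_ord_recl /= mul0r subr0 !mul0r.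
Qed.

Lemma egf_dfall_id mu : eq_upto N (egf (dfall mu mu)) (1 + mu *: 'X).
Proof.
move=> [|[|k]] kN; rewrite coef_egf // coefD coefC coefZ coefX /=.
- by rewrite dfall0 divr1 mulr0 addr0.
- by rewrite /dfall big_ord1 /= mul0r subr0 divr1 mulr1 add0r.
- by rewrite dfall_id mul0r mulr0 addr0.
Qed.

Lemma egf_fall0 : eq_upto N (egf (fall 0)) 1.
Proof. by rewrite (eq_egf (fallE 0)); exact: egf_dfall0. Qed.

Lemma egf_fall_addr1 y : eq_upto N (egf (fall (y + 1))) (egf (fall y) * (1 + 'X)).
Proof.
have := egf_dfall_id 1; rewrite scale1r !(eq_egf (fallE _)) => egf_dfall11.
apply: eq_upto_sym; apply: eq_upto_trans (egf_dfallD 1 y 1).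
exact: eq_uptoM eq_upto_refl (eq_upto_sym egf_dfall11).
Qed.

End TruncatedEGF.

Section DegenerateExponential.
Context {R : realType} (lam : R) (N : nat).

Definition dexpm1 : {poly R} := egf N (dfall lam 1) - 1.

(* The coefficients of W(s) = ((1 + s)^lam - 1) / (lam s). *)
Definition bern_weight m : R := lam ^+ m / ((m.+1)`!)%:R * dfall lam^-1 1 m.+1.

Lemma dexpm1_coef0 : dexpm1`_0 = 0.
Proof. by rewrite coefB coef_egf // coefC dfall0 divr1 subrr. Qed.

Lemma coef_dexpm1 m : (m <= N)%N -> dexpm1`_m = egm1_coef lam m.
Proof.
by case: m => [|m] mN; rewrite ?dexpm1_coef0 // coefB coef_egf // coefC subr0.
Qed.

Lemma egf_dfall_nat m :
  eq_upto N (egf N (dfall lam m%:R)) (egf N (fall m%:R) \Po dexpm1).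
Proof.
elim: m => [|m IH].
  apply: eq_upto_trans (egf_dfall0 N lam) _; apply: eq_upto_sym.
  apply: eq_upto_trans (eq_upto_comp dexpm1_coef0 (egf_fall0 N)) _.
  by rewrite -polyC1 comp_polyC.
rewrite -natr1; apply: eq_upto_trans (eq_upto_sym (egf_dfallD N lam m%:R 1)) _.
have -> : egf N (dfall lam 1) = 1 + dexpm1 by rewrite addrC subrK.
apply: eq_upto_trans (eq_uptoM IH eq_upto_refl) _; apply: eq_upto_sym.
apply: eq_upto_trans (eq_upto_comp dexpm1_coef0 (egf_fall_addr1 N _)) _.
by rewrite comp_polyM comp_polyD comp_polyX -polyC1 comp_polyC.
Qed.

Context {S2 : nat -> nat -> R}.
Hypothesis S2_stirling : is_degStirling2 lam S2.

Lemma coef_dexpm1X l k : (l <= N)%N -> (k <= l)%N ->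
  (dexpm1 ^+ k)`_l = (k`!)%:R * (S2 l k / (l`!)%:R).
Proof.
move=> lN le_kl.
pose d k := (dexpm1 ^+ k)`_l / (k`!)%:R - S2 l k / (l`!)%:R.
suff /eqP : d k = 0 by rewrite subr_eq0 => /eqP <-; field; rewrite natr_fact_neq0.
apply: (@fall_nat_sum_eq0 _ l.+1) => // m.
under eq_bigr => i _ do rewrite /d mulrBr.
apply/eqP; rewrite sumrB subr_eq0; apply/eqP.
transitivity ((egf N (fall m%:R) \Po dexpm1)`_l).
  rewrite coef_comp_poly_leq ?dexpm1_coef0 //; apply: eq_bigr => -[i /= lt_il] _.
  have le_iN : (i <= N)%N by apply: leq_trans lN; rewrite -ltnS.
  by rewrite coef_egf // mulrA mulrAC.
rewrite -(egf_dfall_nat m l lN) coef_egf // S2_stirling mulr_suml.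
by apply: eq_bigr => i _; rewrite mulrAC mulrC mulrA.
Qed.

Lemma egf_fall_dexpm1 x : eq_upto N (egf N (fall x) \Po dexpm1) (egf N (dfall lam x)).
Proof.
move=> l lN; rewrite coef_comp_poly_leq ?dexpm1_coef0 // coef_egf // S2_stirling mulr_suml.
apply: eq_bigr => -[k /= lt_kl] _; have le_kl : (k <= l)%N by rewrite -ltnS.
rewrite coef_egf ?(leq_trans le_kl) // coef_dexpm1X //.
by field; rewrite !natr_fact_neq0.
Qed.

Hypothesis lam_neq0 : lam != 0.

Lemma bern_weight_dexpm1 :
  eq_upto N ((\poly_(m < N.+1) bern_weight m \Po dexpm1) * dexpm1) 'X.
Proof.
pose W := \poly_(m < N.+1) bern_weight m.
have lamWX : eq_upto N (lam *: (W * 'X)) (egf N (fall lam) - 1).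
  move=> [|k] kN; rewrite coefZ coefMX coefB coef_egf // coefC /=.
    by rewrite fall0 divr1 subrr mulr0.
  rewrite subr0 coef_poly ltnS (ltnW kN) /bern_weight (fall_dfallV _ _ lam_neq0).
  rewrite exprS factS natrM; field.
  by rewrite natr_fact_neq0 nat1r pnatr_eq0.
move=> i iN; apply: (mulfI lam_neq0); rewrite -!coefZ.
rewrite -[dexpm1 in X in lam *: (_ * X)]comp_polyX -comp_polyM -comp_polyZ.
rewrite (eq_upto_comp dexpm1_coef0 lamWX) // comp_polyB -polyC1 comp_polyC polyC1.
rewrite coefB (egf_fall_dexpm1 lam i iN) (egf_dfall_id N lam i iN) coefD.
ring.
Qed.

End DegenerateExponential.

Section DegenerateBernoulli.
Context {R : realType} (lam : R).

Lemma is_degBernoulli_egf x b :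
  (forall n, eq_upto n (dexpm1 lam n * egf n b) ('X * egf n (dfall lam x))) ->
  is_degBernoulli lam x b.
Proof.
move=> h n; transitivity ((egf n b * dexpm1 lam n)`_n).
  rewrite coefM; apply: eq_bigr => -[i /= lt_in] _.
  by rewrite coef_egf -1?ltnS // coef_dexpm1 ?leq_subr // mulrC.
rewrite mulrC (h n n (leqnn n)) coefXM; case: n {h} => [|n] //=.
by rewrite coef_egf.
Qed.

Lemma is_degBernoulli_unique {x b b'} :
  is_degBernoulli lam x b -> is_degBernoulli lam x b' -> b =1 b'.
Proof.
move=> hb hb'; elim/ltn_ind=> n IH.
have egm1_coef1 : egm1_coef lam 1 = 1.
  by rewrite /egm1_coef /dfall big_ord1 mul0r subr0 divr1.
have := hb n.+1; rewrite -(hb' n.+1) !big_ord_recr /= subnn subSnn egm1_coef1.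
rewrite (eq_bigr (fun i : 'I_n => egm1_coef lam (n.+1 - i) * (b' i / (i`!)%:R))).
  by rewrite !mul0r !addr0 !mul1r => /addrI /(mulIf (invr_neq0 (natr_fact_neq0 n))).
by move=> [i /= lt_in] _; rewrite IH.
Qed.

Lemma coef_egf_fall_weight x N k : (k <= N)%N ->
  (egf N (fall x) * \poly_(m < N.+1) bern_weight lam m)`_k =
  \sum_(j < k.+1) binomR x j * bern_weight lam (k - j).
Proof.
move=> kN; rewrite coefM; apply: eq_bigr => -[j /= lt_jk] _.
have le_jk : (j <= k)%N by rewrite -ltnS.
by rewrite coef_egf ?(leq_trans le_jk) // coef_poly ltnS (leq_trans (leq_subr j k)).
Qed.

Variable S2 : nat -> nat -> R.

Definition degBernoulli_stirling x n : R :=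
  \sum_(k < n.+1) (k`!)%:R * S2 n k * \sum_(j < k.+1) binomR x j * bern_weight lam (k - j).

Hypotheses (lam_neq0 : lam != 0) (S2_stirling : is_degStirling2 lam S2).

Lemma egf_degBernoulli_stirling x N :
  eq_upto N (egf N (degBernoulli_stirling x))
    ((egf N (fall x) * \poly_(m < N.+1) bern_weight lam m) \Po dexpm1 lam N).
Proof.
move=> i iN; rewrite coef_egf // coef_comp_poly_leq ?dexpm1_coef0 // mulr_suml.
apply: eq_bigr => -[k /= lt_ki] _; have le_ki : (k <= i)%N by rewrite -ltnS.
rewrite coef_egf_fall_weight ?(leq_trans le_ki) // (coef_dexpm1X _ _ S2_stirling) //.
by rewrite mulrAC [RHS]mulrC mulrA.
Qed.

Lemma is_degBernoulli_stirling x : is_degBernoulli lam x (degBernoulli_stirling x).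
Proof.
apply: is_degBernoulli_egf => n.
apply: eq_upto_trans (eq_uptoM eq_upto_refl (egf_degBernoulli_stirling x n)) _.
rewrite comp_polyM mulrCA [dexpm1 lam n * _]mulrC.
apply: eq_upto_trans (eq_uptoM (egf_fall_dexpm1 _ _ S2_stirling x)
                                (bern_weight_dexpm1 _ _ S2_stirling lam_neq0)) _.
by rewrite mulrC.
Qed.

End DegenerateBernoulli.

Theorem theorem7 (R : realType) (lam : R) (hlam : lam != 0)
  (beta : R -> nat -> R) (S2 : nat -> nat -> R)
  (hbeta : forall x : R, is_degBernoulli lam x (beta x))
  (hS2 : is_degStirling2 lam S2) :
  (forall (x : R) (n : nat),
     beta x n = \sum_(k < n.+1) (k`!)%:R * S2 n k *
        \sum_(j < k.+1) binomR x j * (lam ^+ (k - j) / (((k - j).+1)`!)%:R)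
                        * dfall lam^-1 1 (k - j).+1)
  /\
  (forall n : nat,
     beta 0 n = \sum_(k < n.+1) (k`!)%:R * S2 n k *
        (lam ^+ k / ((k.+1)`!)%:R) * dfall lam^-1 1 k.+1).
Proof.
have beta_stirling x : beta x =1 degBernoulli_stirling lam S2 x :=
  is_degBernoulli_unique lam (hbeta x) (is_degBernoulli_stirling lam S2 hlam hS2 x).
split=> [x n | n]; rewrite beta_stirling; apply: eq_bigr => k _.
  by congr (_ * _); apply: eq_bigr => j _; rewrite /bern_weight mulrA.
rewrite big_ord_recl big1 => [|j _]; last first.
  by rewrite /binomR /fall big_ord_recl subrr !mul0r.
by rewrite addr0 /= subn0 /binomR fall0 divr1 mul1r /bern_weight mulrA.
Qed.
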